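(* Let $f_0$ be a continuous probability density on $\mathbb{R}$ with $f_0(-z)=f_0(z)$ for all $z$, and let $F_0(x)=\int_{-\infty}^x f_0(z)\,dz$. For $\alpha>0,\theta>0$ let $g(\theta\mid\alpha)=\alpha f_0(\alpha\theta)$. Assume: (a) for all $0<\alpha_1<\alpha_2$, the ratio $g(\theta\mid\alpha_2)/g(\theta\mid\alpha_1)$ is strictly monotone in $\theta\in(0,\infty)$ (strict monotone likelihood ratio); (b) for all $0<\alpha_1<\alpha_2$, the function $\theta\mapsto \log\frac{g(\theta\mid\alpha_2)}{g(\theta\mid\alpha_1)}$ is convex on $(0,\infty)$. Let $X$ have density $\frac1\sigma f_0\big(\frac{x-\mu}{\sigma}\big)$, $\mu\in\mathbb{R}$, $\sigma>0$. Then: (i) for each $c>1$ the equation $$\frac{f_0\big(\frac{c}{c+1}\theta\big)}{f_0\big(\frac{c}{c-1}\theta\big)} = \frac{c+1}{c-1}$$ has a unique root $\theta=\theta(c)>0$; (ii) $\theta(c)$ is continuous in $c\in(1,\infty)$; (iii) for every $c>1$, $$\inf_{\mu\in\mathbb{R},\,\sigma>0} P_{\mu,\sigma}\big(X-c|X|\le\mu\le X+c|X|\big) = \psi(c) := F_0\Big(\frac{c}{c+1}\theta(c)\Big)+1-F_0\Big(\frac{c}{c-1}\theta(c)\Big);$$ (iv) $\psi(c)$ is continuous in $c\in(1,\infty)$. *)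

From HB Require Import structures.
From mathcomp Require Import all_boot all_order all_algebra.
From mathcomp Require Import all_classical all_reals all_analysis.
Set Implicit Arguments. Unset Strict Implicit. Unset Printing Implicit Defensive.
Import Order.TTheory GRing.Theory Num.Theory.
Import numFieldNormedType.Exports.
Local Open Scope classical_set_scope.
Local Open Scope ring_scope.

Definition strictly_monotone_pos {R : realType} (h : R -> R) : Prop :=
  (forall x y : R, 0 < x -> x < y -> h x < h y) \/
  (forall x y : R, 0 < x -> x < y -> h y < h x).

Definition convex_pos {R : realType} (h : R -> R) : Prop :=
  forall (x y t : R), 0 < x -> 0 < y -> 0 <= t -> t <= 1 ->
    h (t * x + (1 - t) * y) <= t * h x + (1 - t) * h y.

Definition cdf_of {R : realType} (f0 : R -> R) (x : R) : R :=
  Rintegral (@lebesgue_measure R) `]-oo, x] f0.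

Definition gscale {R : realType} (f0 : R -> R) (theta alpha : R) : R :=
  alpha * f0 (alpha * theta).

Definition cover_set {R : realType} (c mu : R) : set R :=
  [set x : R | x - c * `|x| <= mu <= x + c * `|x|].

Definition cover_prob {R : realType} (f0 : R -> R) (c mu sigma : R) : \bar R :=
  \int[@lebesgue_measure R]_(x in cover_set c mu) (f0 ((x - mu) / sigma) / sigma)%:E.

(* The probability in (iii) depends on (mu, sigma) only through t = |mu| / sigma: by symmetry
   of f0 it equals h(t) = F0(a t) + 1 - F0(b t) with a = c/(c+1) and b = c/(c-1). Now h(0) = 1,
   h <= 1 and h'(t) = -(g(t|b) - g(t|a)). The difference g(.|b) - g(.|a) cannot be negative on
   a whole interval (0, s), since h would then exceed 1; nor positive on a whole ray (s, +oo),
   since h would then stay below some 1 - d and F0 would gain d on each of the adjacent windows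
   (a t0 q^n, b t0 q^n], q = b/a. Hence it has a positive root, and by the strict monotone
   likelihood ratio it is positive before that root and negative after it. So theta(c) is the
   unique root and the minimiser of h, which gives (i) and (iii); this sign pattern is stable
   under perturbation of c, which gives (ii) and then (iv). *)

From HB Require Import structures.
From mathcomp Require Import all_boot all_order all_algebra.
From mathcomp Require Import all_classical all_reals all_analysis.
From mathcomp Require Import measurable_realfun.
From mathcomp Require Import ring lra.
Import Order.TTheory GRing.Theory Num.Theory.
Import numFieldNormedType.Exports.
Local Open Scope classical_set_scope.
Local Open Scope ring_scope.

Lemma is_derive_affine {R : realType} (m s z : R) :
  is_derive z 1 (fun y : R => m + s * y) s.
Proof. by apply: is_derive_eq; rewrite add0r mul1r [_%:A]mulr1. Qed.

Lemma is_derive_scale {R : realType} (k z : R) : is_derive z 1 (fun y : R => k * y) k.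
Proof. by apply: is_derive_eq; rewrite [_%:A]mulr1. Qed.

Lemma derive1_affine {R : realType} (m s : R) :
  (fun y : R => m + s * y)^`()%classic = fun=> s.
Proof.
by apply/funext => z; rewrite derive1E (@derive_val _ _ _ _ _ _ _ (is_derive_affine m s z)).
Qed.

Lemma cover_set_gt0 {R : realType} (c m : R) : 1 < c -> 0 < m ->
  cover_set c m = `]-oo, - m / (c - 1)] `|` `[m / (c + 1), +oo[.
Proof.
move=> c1 m0; have c1' : 0 < c - 1 by lra.
have c2 : 0 < c + 1 by lra.
apply/seteqP; split => x; rewrite /cover_set /= !in_itv/= andbT ler_pdivlMr// ler_pdivrMr//;
  case: (lerP 0 x) => hx;
  [rewrite ger0_norm//|rewrite ltr0_norm//|rewrite ger0_norm//|rewrite ltr0_norm//].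
- by move=> /andP[h1 h2]; right; nra.
- by move=> /andP[h1 h2]; left; nra.
- by case=> h; apply/andP; split; nra.
- by case=> h; apply/andP; split; nra.
Qed.

Lemma cover_set_lt0 {R : realType} (c m : R) : 1 < c -> m < 0 ->
  cover_set c m = `]-oo, m / (c + 1)] `|` `[- m / (c - 1), +oo[.
Proof.
move=> c1 m0; have c1' : 0 < c - 1 by lra.
have c2 : 0 < c + 1 by lra.
apply/seteqP; split => x; rewrite /cover_set /= !in_itv/= andbT ler_pdivlMr// ler_pdivrMr//;
  case: (lerP 0 x) => hx;
  [rewrite ger0_norm//|rewrite ltr0_norm//|rewrite ger0_norm//|rewrite ltr0_norm//].
- by move=> /andP[h1 h2]; right; nra.
- by move=> /andP[h1 h2]; left; nra.
- by case=> h; apply/andP; split; nra.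
- by case=> h; apply/andP; split; nra.
Qed.

Lemma cover_set0 {R : realType} (c : R) : 1 < c -> cover_set c 0 = setT.
Proof.
move=> c1; apply/seteqP; split => x //= _; rewrite /cover_set /=.
by case: (lerP 0 x) => hx; [rewrite ger0_norm|rewrite ltr0_norm] => //;
  apply/andP; split; nra.
Qed.

Definition coverage {R : realType} (f0 : R -> R) (a b t : R) : R :=
  cdf_of f0 (a * t) + 1 - cdf_of f0 (b * t).

Definition gscale_diff {R : realType} (f0 : R -> R) (a b t : R) : R :=
  gscale f0 t b - gscale f0 t a.

Definition crosses_down {R : realType} (d : R -> R) (th : R) : Prop :=
  [/\ 0 < th, d th = 0, forall t, 0 < t -> t < th -> 0 < d t
    & forall t, th < t -> d t < 0].

Lemma crosses_down_unique {R : realType} (d : R -> R) (th t : R) :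
  crosses_down d th -> 0 < t -> d t = 0 -> t = th.
Proof.
case=> _ _ Hl Hr t0 dt0; have [tth|tht|//] := ltgtP t th.
- by have := Hl t t0 tth; rewrite dt0 ltxx.
- by have := Hr t tht; rewrite dt0 ltxx.
Qed.

Lemma crosses_down_continuous {R : realType} (d : R -> R -> R) (theta : R -> R) (c : R) :
  (\forall x \near c, crosses_down (d x) (theta x)) ->
  (forall t, {for c, continuous (d ^~ t)}) ->
  {for c, continuous theta}.
Proof.
move=> Hnear dcont; have [th0 _ Hl Hr] := nbhs_singleton Hnear.
apply/cvgrPdist_le => e e0.
set ep := Num.min e (theta c / 2).
have ep0 : 0 < ep by rewrite lt_min e0 divr_gt0.
have epe : ep <= e by rewrite ge_min lexx.
have epth : ep <= theta c / 2 by rewrite ge_min lexx orbT.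
have lo_gt0 : 0 < theta c - ep by lra.
have lo_lt : theta c - ep < theta c by lra.
have th_hi : theta c < theta c + ep by lra.
have th_pos : 0 < theta c + ep by lra.
have dlo := cvgr_gt _ (dcont (theta c - ep)) 0 (Hl _ lo_gt0 lo_lt).
have dhi := cvgr_lt _ (dcont (theta c + ep)) 0 (Hr _ th_hi).
near=> x.
have [tx0 _ Hlx Hrx] : crosses_down (d x) (theta x) by near: x.
have lo : theta c - ep <= theta x.
  rewrite leNgt; apply/negP => /Hrx; apply/negP; rewrite -leNgt ltW//.
  by near: x; exact: dlo.
have hi : theta x <= theta c + ep.
  rewrite leNgt; apply/negP => /(Hlx _ th_pos); apply/negP; rewrite -leNgt ltW//.
  by near: x; exact: dhi.
rewrite ler_norml; apply/andP; split; lra.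
Unshelve. all: end_near. Qed.

Lemma scale_pair_lt {R : realType} {c : R} : 1 < c -> 0 < c / (c + 1) < c / (c - 1).
Proof.
move=> c1; rewrite divr_gt0 /=; try lra.
by rewrite ltr_pM2l ?ltf_pV2 ?posrE; lra.
Qed.

Lemma continuous_div_shift {R : realType} (k c : R) :
  c + k != 0 -> {for c, continuous (fun x : R => x / (x + k))}.
Proof.
move=> ck; apply: cvgM; first exact: cvg_id.
by apply: cvgV => //; apply: cvgD; [exact: cvg_id|exact: cvg_cst].
Qed.

(* A zero of f0 at z > 0 makes the likelihood ratio vanish both at z / 2 and at z, the latter
   through the convention x / 0 = 0. *)
Lemma gt0_density_MLR {R : realType} (f0 : R -> R) : (forall z, 0 <= f0 z) ->
  strictly_monotone_pos (fun t => gscale f0 t 2 / gscale f0 t 1) ->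
  forall z, 0 < z -> 0 < f0 z.
Proof.
move=> f0_ge0 mono z z0; rewrite lt_def f0_ge0 andbT; apply/eqP => fz.
have E1 : gscale f0 (z / 2) 2 / gscale f0 (z / 2) 1 = 0.
  by rewrite /gscale [X in f0 X](_ : _ = z) ?fz ?mulr0 ?mul0r//; lra.
have E2 : gscale f0 z 2 / gscale f0 z 1 = 0.
  by rewrite /gscale !mul1r fz invr0 mulr0.
have z2 : 0 < z / 2 by lra.
have zz : z / 2 < z by lra.
by case: mono => /(_ _ _ z2 zz); rewrite E1 E2 ltxx.
Qed.

Section density.
Context {R : realType} {f0 : R -> R}.
Hypothesis f0_cont : continuous f0.
Hypothesis f0_ge0 : forall z, 0 <= f0 z.
Hypothesis f0_int1 : (\int[@lebesgue_measure R]_z (f0 z)%:E = 1)%E.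
Local Notation mu := (@lebesgue_measure R).

Lemma measurable_EFin_f0 (A : set R) : measurable_fun A (fun x => (f0 x)%:E).
Proof.
by apply/measurable_EFinP/measurable_funTS; exact: continuous_measurable_fun.
Qed.

Lemma integrable_f0 (A : set R) : measurable A -> mu.-integrable A (EFin \o f0).
Proof.
move=> mA; apply: (@integrableS _ _ _ mu setT A) => //.
apply/integrableP; split; first exact: measurable_EFin_f0.
under eq_integral => x _ do rewrite gee0_abs ?lee_fin//.
by rewrite f0_int1 ltry.
Qed.

Lemma cdf_ofE x : ((cdf_of f0 x)%:E = \int[mu]_(t in `]-oo, x]) (f0 t)%:E)%E.
Proof.
rewrite /cdf_of /Rintegral fineK//.
by apply: integrable_fin_num => //; exact: integrable_f0.
Qed.

Lemma cdf_ofE_itvo x : ((cdf_of f0 x)%:E = \int[mu]_(t in `]-oo, x[) (f0 t)%:E)%E.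
Proof. by rewrite cdf_ofE integral_itv_bndo_bndc//; exact: measurable_EFin_f0. Qed.

Lemma cdf_of_ge0 x : 0 <= cdf_of f0 x.
Proof. by rewrite -lee_fin cdf_ofE integral_ge0// => t _; rewrite lee_fin. Qed.

Lemma le_cdf_of x y : x <= y -> cdf_of f0 x <= cdf_of f0 y.
Proof.
move=> xy; rewrite -lee_fin !cdf_ofE; apply: ge0_subset_integral => //.
- exact: measurable_EFin_f0.
- by move=> t _; rewrite lee_fin.
- by apply: subset_itvl; rewrite bnd_simp.
Qed.

Lemma integral_f0_itv_ge x :
  (\int[mu]_(t in `[x, +oo[) (f0 t)%:E = (1 - cdf_of f0 x)%:E)%E.
Proof.
have := f0_int1; rewrite -(itv_setU_setT true x) ge0_integral_setU//=.
- by rewrite -cdf_ofE_itvo EFinB => <-; rewrite addeAC subee ?add0e.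
- exact: measurable_EFin_f0.
- by move=> t _; rewrite lee_fin.
- exact: disjoint_rays.
Qed.

Lemma cdf_of_le1 x : cdf_of f0 x <= 1.
Proof.
rewrite -subr_ge0 -lee_fin -integral_f0_itv_ge.
by apply: integral_ge0 => t _; rewrite lee_fin.
Qed.

Lemma is_derive_cdf_of (x : R) : is_derive x 1 (cdf_of f0) (f0 x).
Proof.
have [|||d <-] := @continuous_FTC1 R f0 (BInfty _ true) x (x + 1) _ _ _ (f0_cont x).
- by rewrite ltrDl.
- exact: integrable_f0.
- by rewrite ltNyr.
by rewrite derive1E; exact: derivableP d.
Qed.

Lemma continuous_cdf_of : continuous (cdf_of f0).
Proof.
move=> t; apply/differentiable_continuous/derivable1_diffP.
exact: (@ex_derive _ _ _ _ _ _ _ (is_derive_cdf_of t)).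
Qed.

Hypothesis f0_sym : forall z, f0 (- z) = f0 z.

Lemma cdf_ofN x :
  cdf_of f0 (- x) = 1 - cdf_of f0 x.
Proof.
apply/eqP; rewrite -eqe cdf_ofE -integral_f0_itv_ge; apply/eqP.
rewrite ge0_integration_by_substitutionNy.
- by apply: eq_integral => t _ /=; rewrite f0_sym.
- exact: continuous_subspaceT.
- by [].
Qed.

Lemma continuous_loc_scale (m s : R) : continuous (fun x => f0 ((x - m) / s) / s).
Proof.
move=> x; apply: cvgM; last exact: cvg_cst.
apply: (@continuous_comp _ _ _ (fun x => (x - m) / s) f0); last exact: f0_cont.
by apply: cvgM; [apply: cvgB; [exact: cvg_id|exact: cvg_cst]|exact: cvg_cst].
Qed.

Lemma integral_loc_scale_itv_le (m s A : R) : 0 < s ->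
  (\int[mu]_(x in `]-oo, A]) (f0 ((x - m) / s) / s)%:E
   = (cdf_of f0 ((A - m) / s))%:E)%E.
Proof.
move=> s0; set b := (A - m) / s.
have -> : A = m + s * b by rewrite /b mulrC divfK ?gt_eqF// addrC subrK.
rewrite (@increasing_ge0_integration_by_substitutionNy _ (fun y => m + s * y)).
- rewrite cdf_ofE; apply: eq_integral => z _; rewrite derive1_affine /=.
  by rewrite !fctE /= [m + _]addrC addrK [s * z]mulrC mulfK ?gt_eqF// divfK ?gt_eqF.
- by move=> x y _ _ xy /=; rewrite ltrD2l ltr_pM2l.
- by rewrite derive1_affine => x _; exact: cvg_cst.
- by rewrite derive1_affine; exact: is_cvg_cst.
- by rewrite derive1_affine; exact: cvg_cst.
- split; first by move=> x _; exact: (@ex_derive _ _ _ _ _ _ _ (is_derive_affine m s x)).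
  apply: cvg_at_left_filter; apply: cvgD; first exact: cvg_cst.
  by apply: cvgM; [exact: cvg_cst|exact: cvg_id].
- by apply/cvgrNyPle => M; near=> x; rewrite -lerBrDl -ler_pdivlMl.
- exact/continuous_subspaceT/continuous_loc_scale.
- by move=> x _; rewrite divr_ge0// ltW.
Unshelve. all: end_near. Qed.

Lemma integral_loc_scale_itv_ge (m s B : R) : 0 < s ->
  (\int[mu]_(x in `[B, +oo[) (f0 ((x - m) / s) / s)%:E
   = (1 - cdf_of f0 ((B - m) / s))%:E)%E.
Proof.
move=> s0; set b := (B - m) / s.
have -> : B = m + s * b by rewrite /b mulrC divfK ?gt_eqF// addrC subrK.
rewrite (@increasing_ge0_integration_by_substitutiony _ (fun y => m + s * y)).
- rewrite -integral_f0_itv_ge; apply: eq_integral => z _; rewrite derive1_affine /=.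
  by rewrite !fctE /= [m + _]addrC addrK [s * z]mulrC mulfK ?gt_eqF// divfK ?gt_eqF.
- by move=> x y _ _ xy /=; rewrite ltrD2l ltr_pM2l.
- by rewrite derive1_affine => x _; exact: cvg_cst.
- by rewrite derive1_affine; exact: is_cvg_cst.
- by rewrite derive1_affine; exact: is_cvg_cst.
- split; first by move=> x _; exact: (@ex_derive _ _ _ _ _ _ _ (is_derive_affine m s x)).
  apply: cvg_at_right_filter; apply: cvgD; first exact: cvg_cst.
  by apply: cvgM; [exact: cvg_cst|exact: cvg_id].
- by apply/cvgryPge => M; near=> x; rewrite -lerBlDl -ler_pdivrMl.
- exact/continuous_subspaceT/continuous_loc_scale.
- by move=> x _; rewrite divr_ge0// ltW.
Unshelve. all: end_near. Qed.

Lemma measurable_EFin_loc_scale (m s : R) (A : set R) :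
  measurable_fun A (fun x => (f0 ((x - m) / s) / s)%:E).
Proof.
apply/measurable_EFinP/measurable_funTS.
exact: continuous_measurable_fun (continuous_loc_scale m s).
Qed.

Lemma cover_prob_rays (c m s A B : R) : 0 < s -> A < B ->
  cover_set c m = `]-oo, A] `|` `[B, +oo[ ->
  cover_prob f0 c m s = (cdf_of f0 ((A - m) / s) + 1 - cdf_of f0 ((B - m) / s))%:E.
Proof.
move=> s0 AB E; rewrite /cover_prob E ge0_integral_setU//=.
- by rewrite integral_loc_scale_itv_le// integral_loc_scale_itv_ge// -EFinD addrA.
- exact: measurable_EFin_loc_scale.
- by move=> x _; rewrite lee_fin divr_ge0// ltW.
- apply: lt_disjoint => x y; rewrite !in_itv/= andbT => xA By.
  exact: le_lt_trans xA (lt_le_trans AB By).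
Qed.

Lemma cover_prob_at0 (c s : R) : 1 < c -> 0 < s -> cover_prob f0 c 0 s = 1%E.
Proof.
move=> c1 s0; rewrite /cover_prob cover_set0// -(itv_setU_setT true 0) ge0_integral_setU//=.
- rewrite integral_itv_bndo_bndc; last exact: measurable_EFin_loc_scale.
  by rewrite integral_loc_scale_itv_le// integral_loc_scale_itv_ge// -EFinD addrC subrK.
- exact: measurable_EFin_loc_scale.
- by move=> x _; rewrite lee_fin divr_ge0// ltW.
- exact: disjoint_rays.
Qed.

Lemma cover_probE (c m s : R) : 1 < c -> 0 < s ->
  cover_prob f0 c m s = (coverage f0 (c / (c + 1)) (c / (c - 1)) (`|m| / s))%:E.
Proof.
move=> c1 s0; have c1' : 0 < c - 1 by lra.
have c2 : 0 < c + 1 by lra.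
have [m0|m0|->] := ltgtP m 0.
- rewrite (@cover_prob_rays c m s _ _ s0 _ (cover_set_lt0 c m c1 m0)); last first.
    by rewrite (@lt_trans _ _ 0)// ?pmulr_llt0 ?pmulr_rgt0 ?invr_gt0// oppr_gt0.
  by rewrite /coverage ltr0_norm//; congr (cdf_of f0 _ + 1 - cdf_of f0 _)%:E; field;
    rewrite ?gt_eqF// ?lt_eqF.
- rewrite (@cover_prob_rays c m s _ _ s0 _ (cover_set_gt0 c m c1 m0)); last first.
    by rewrite (@lt_trans _ _ 0)// ?pmulr_rgt0 ?invr_gt0// mulNr oppr_lt0 pmulr_rgt0// invr_gt0.
  rewrite /coverage gtr0_norm//.
  have -> : (- m / (c - 1) - m) / s = - (c / (c - 1) * (m / s)).
    by field; rewrite ?gt_eqF// ?lt_eqF.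
  have -> : (m / (c + 1) - m) / s = - (c / (c + 1) * (m / s)).
    by field; rewrite ?gt_eqF// ?lt_eqF.
  by rewrite !cdf_ofN//; congr EFin; lra.
- by rewrite cover_prob_at0// /coverage normr0 mul0r !mulr0 addrAC subrr add0r.
Qed.

Lemma continuous_gscale_param (al : R -> R) (t c : R) :
  {for c, continuous al} -> {for c, continuous (fun x => gscale f0 t (al x))}.
Proof.
move=> alc; apply: cvgM => //; apply: continuous_comp; last exact: f0_cont.
by apply: cvgM => //; exact: cvg_cst.
Qed.

Lemma continuous_coverage_param (al be theta : R -> R) (c : R) :
  {for c, continuous al} -> {for c, continuous be} -> {for c, continuous theta} ->
  {for c, continuous (fun x => coverage f0 (al x) (be x) (theta x))}.
Proof.
move=> alc bec thc; rewrite /coverage.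
have cdf_comp (k : R -> R) :
    {for c, continuous k} -> {for c, continuous (fun x => cdf_of f0 (k x * theta x))}.
  move=> kc; apply: (@continuous_comp _ _ _ (fun x => k x * theta x) (cdf_of f0)).
    exact: cvgM.
  exact: continuous_cdf_of.
by apply: cvgB; [apply: cvgD; [exact: cdf_comp|exact: cvg_cst]|exact: cdf_comp].
Qed.

Hypothesis f0_MLR : forall a1 a2 : R, 0 < a1 -> a1 < a2 ->
  strictly_monotone_pos (fun th => gscale f0 th a2 / gscale f0 th a1).

Lemma f0_gt0 z : 0 < z -> 0 < f0 z.
Proof. by apply: gt0_density_MLR => //; apply: f0_MLR; lra. Qed.

Lemma gscale_gt0 k t : 0 < k -> 0 < t -> 0 < gscale f0 t k.
Proof. by move=> k0 t0; rewrite mulr_gt0// f0_gt0// mulr_gt0. Qed.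

Section crossing.
Context {a b : R}.
Hypothesis a_gt0 : 0 < a.
Hypothesis lt_ab : a < b.
Local Notation D := (gscale_diff f0 a b).
Local Notation h := (coverage f0 a b).
Local Notation r := (fun t => gscale f0 t b / gscale f0 t a).

Lemma continuous_gscale_diff : continuous D.
Proof.
have gscale_cont k : continuous (fun t => gscale f0 t k).
  move=> t; apply: cvgM; first exact: cvg_cst.
  apply: (@continuous_comp _ _ _ (fun t => k * t) f0); last exact: f0_cont.
  by apply: cvgM; [exact: cvg_cst|exact: cvg_id].
by move=> t; apply: cvgB; exact: gscale_cont.
Qed.

Lemma is_derive_coverage (t : R) : is_derive t 1 h (- D t).
Proof.
have der k : is_derive t 1 (cdf_of f0 \o (fun y => k * y)) (f0 (k * t) * k).
  exact: is_derive1_comp (is_derive_cdf_of _) (is_derive_scale k t).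
have := is_deriveB (is_deriveD (der a) (is_derive_cst (1 : R) t 1)) (der b).
by move=> ?; apply: is_derive_eq; rewrite /gscale_diff /gscale; ring.
Qed.

Lemma continuous_coverage : continuous h.
Proof.
move=> t; apply/differentiable_continuous/derivable1_diffP.
exact: (@ex_derive _ _ _ _ _ _ _ (is_derive_coverage t)).
Qed.

Lemma coverage_mvt {t1 t2 : R} : t1 < t2 ->
  exists2 x, t1 < x < t2 & h t2 - h t1 = - D x * (t2 - t1).
Proof.
move=> t12; have [x] := @MVT R h (fun x => - D x) t1 t2 t12
  (fun x _ => is_derive_coverage x) (continuous_subspaceT continuous_coverage).
by rewrite in_itv /= => x12 E; exists x.
Qed.

Lemma coverage_le1 {t : R} : 0 <= t -> h t <= 1.
Proof.
move=> t0; suff : cdf_of f0 (a * t) <= cdf_of f0 (b * t) by rewrite /coverage; lra.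
by apply: le_cdf_of; rewrite ler_wpM2r// ltW.
Qed.

Lemma coverage_min (th : R) : crosses_down D th -> forall t, 0 <= t -> h th <= h t.
Proof.
case=> th0 _ Hl Hr t t0; have [tth|tht|->//] := ltgtP t th.
- have [x /andP[tx xth] E] := coverage_mvt tth.
  by have := Hl x (le_lt_trans t0 tx) xth; nra.
- have [x /andP[thx xt] E] := coverage_mvt tht.
  by have := Hr x thx; nra.
Qed.

Lemma exists_gscale_diff_ge0 {s : R} : 0 < s -> exists2 t, 0 < t < s & 0 <= D t.
Proof.
move=> s0; apply: contrapT => noD.
have [x x0s E] := coverage_mvt s0.
have Dx : D x < 0 by rewrite ltNge; apply/negP => Dx; apply: noD; exists x.
have h0 : h 0 = 1 by rewrite /coverage !mulr0 addrAC subrr add0r.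
by have := coverage_le1 (ltW s0); rewrite h0 in E; nra.
Qed.

(* The windows (a u, b u] along u = t0 q^n, q = b / a, are adjacent, so F0 would exceed n d. *)
Lemma not_eventually_cdf_of_gap_ge (t0 d : R) : 0 < t0 -> 0 < d ->
  ~ (forall u, t0 <= u -> d <= cdf_of f0 (b * u) - cdf_of f0 (a * u)).
Proof.
move=> t00 d0 gap; set q := b / a.
have q1 : 1 <= q by rewrite /q ler_pdivlMr// mul1r ltW.
have aq n : a * (t0 * q ^+ n.+1) = b * (t0 * q ^+ n).
  by rewrite exprS /q; field; rewrite gt_eqF.
have Fn n : n%:R * d <= cdf_of f0 (a * (t0 * q ^+ n)).
  elim: n => [|n IH]; first by rewrite mul0r cdf_of_ge0.
  have qn : 1 <= q ^+ n by exact: exprn_ege1.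
  have /gap : t0 <= t0 * q ^+ n by nra.
  by rewrite aq -natr1; lra.
pose n := (Num.truncn (1 / d)).+1.
have := Fn n; have := cdf_of_le1 (a * (t0 * q ^+ n)).
have : 1 < n%:R * d by rewrite -ltr_pdivrMr// truncnS_gt.
lra.
Qed.

Lemma exists_gscale_diff_le0 {s : R} : 0 <= s -> exists2 t, s < t & D t <= 0.
Proof.
move=> s0; apply: contrapT => noD.
have Dpos t : s < t -> 0 < D t.
  by move=> st; rewrite ltNge; apply/negP => Dt; apply: noD; exists t.
have h_decr u v : s < u -> u < v -> h v < h u.
  move=> su uv; have [x /andP[ux xv] E] := coverage_mvt uv.
  by have := Dpos x (lt_trans su ux); nra.
have ht0 : h (s + 1) < 1.
  apply: (lt_le_trans (h_decr (s + 2^-1) _ _ _)); try lra.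
  by apply: coverage_le1; lra.
apply: (@not_eventually_cdf_of_gap_ge (s + 1) (1 - h (s + 1))); try lra.
move=> u su; suff : h u <= h (s + 1) by rewrite /coverage; lra.
move: su; rewrite le_eqVlt => /orP[/eqP->//|su].
by apply/ltW/h_decr => //; lra.
Qed.

Lemma exists_gscale_diff_root : exists2 t, 0 < t & D t = 0.
Proof.
have [t1 /andP[t1_gt0 _] D1] := exists_gscale_diff_ge0 ltr01.
have [t2 t12 D2] := exists_gscale_diff_le0 (ltW t1_gt0).
have [|t] := @IVT R D t1 t2 0 (ltW t12) (continuous_subspaceT continuous_gscale_diff).
  by rewrite ge_min le_max D1 D2 orbT.
by rewrite in_itv /= => /andP[t1t _] Dt; exists t => //; exact: lt_le_trans t1t.
Qed.

Lemma gscale_diffE (t : R) : 0 < t -> D t = gscale f0 t a * (r t - 1).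
Proof. by move=> t0; rewrite mulrBr mulr1 mulrC divfK// gt_eqF// gscale_gt0. Qed.

Lemma exists_crosses_down : exists th, crosses_down D th.
Proof.
have [th th0 Dth] := exists_gscale_diff_root.
have ga_gt0 t : 0 < t -> 0 < gscale f0 t a by exact: gscale_gt0.
have D_gt0 t : 0 < t -> (0 < D t) = (1 < r t).
  by move=> t0; rewrite gscale_diffE// pmulr_rgt0 ?ga_gt0// subr_gt0.
have D_lt0 t : 0 < t -> (D t < 0) = (r t < 1).
  by move=> t0; rewrite gscale_diffE// pmulr_rlt0 ?ga_gt0// subr_lt0.
have r_th : r th = 1.
  apply/eqP; move: Dth; rewrite gscale_diffE// => /eqP.
  by rewrite mulf_eq0 gt_eqF ?ga_gt0//= subr_eq0.
exists th; case: (f0_MLR _ _ a_gt0 lt_ab) => mono.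
- have [t /andP[t0 tth] Dt] := exists_gscale_diff_ge0 th0.
  by move: Dt; rewrite leNgt D_lt0// -r_th mono.
- split=> // [t t0 tth|t tht]; first by rewrite D_gt0// -r_th mono.
  by rewrite D_lt0 ?(lt_trans th0)// -r_th mono// (lt_trans th0).
Qed.

End crossing.


Lemma exists_crossing_family : exists theta : R -> R,
  forall c, 1 < c -> crosses_down (gscale_diff f0 (c / (c + 1)) (c / (c - 1))) (theta c).
Proof.
suff /choice[theta Htheta] c : exists th,
    1 < c -> crosses_down (gscale_diff f0 (c / (c + 1)) (c / (c - 1))) th.
  by exists theta.
have [c1|_] := ltP 1 c; last by exists 0.
have /andP[a0 ab] := scale_pair_lt c1.
by have [th ?] := exists_crosses_down a0 ab; exists th.
Qed.

Lemma crossing_family_continuous (theta : R -> R) (c : R) :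
  (forall c, 1 < c -> crosses_down (gscale_diff f0 (c / (c + 1)) (c / (c - 1))) (theta c)) ->
  1 < c -> {for c, continuous theta}.
Proof.
move=> Htheta c1.
apply: (@crosses_down_continuous _ (fun x => gscale_diff f0 (x / (x + 1)) (x / (x - 1)))).
  by near=> x; apply: Htheta; near: x; exact: (@cvgr_gt _ _ _ _ id c cvg_id 1 c1).
have shift (t k : R) : c + k != 0 -> {for c, continuous (fun x : R => gscale f0 t (x / (x + k)))}.
  by move=> ck; apply/continuous_gscale_param/continuous_div_shift.
have c1' : c + (- 1) != 0 by rewrite gt_eqF//; lra.
have c2 : c + 1 != 0 by rewrite gt_eqF//; lra.
by move=> t; exact: (cvgB (shift t _ c1') (shift t _ c2)).
Unshelve. all: end_near. Qed.

Lemma root_equationE {c t : R} : 1 < c -> 0 < t ->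
  f0 (c / (c + 1) * t) / f0 (c / (c - 1) * t) = (c + 1) / (c - 1) <->
  gscale_diff f0 (c / (c + 1)) (c / (c - 1)) t = 0.
Proof.
move=> c1 t0; have /andP[a0 ab] := scale_pair_lt c1.
have B0 : 0 < f0 (c / (c - 1) * t) by rewrite f0_gt0// mulr_gt0// (lt_trans a0 ab).
rewrite /gscale_diff /gscale.
set A := f0 (_ / (c + 1) * _); set B := f0 (_ / (c - 1) * _).
split=> [E|D0].
- have -> : A = (c + 1) / (c - 1) * B by rewrite -E divfK// gt_eqF.
  by field; rewrite ?gt_eqF//; lra.
- have -> : A = (c + 1) / (c - 1) * B.
    transitivity (A + (c + 1) / c * (c / (c - 1) * B - c / (c + 1) * A)).
      by rewrite D0 mulr0 addr0.
    by field; rewrite ?gt_eqF//; lra.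
  by rewrite mulfK// gt_eqF.
Qed.

Lemma inf_cover_prob (c th : R) : 1 < c ->
  crosses_down (gscale_diff f0 (c / (c + 1)) (c / (c - 1))) th ->
  ereal_inf [set p | exists mu sigma : R, 0 < sigma /\ p = cover_prob f0 c mu sigma]
  = (coverage f0 (c / (c + 1)) (c / (c - 1)) th)%:E.
Proof.
move=> c1 cross; have [th0 _ _ _] := cross.
apply/eqP; rewrite eq_le; apply/andP; split.
- apply: ereal_inf_lbound; exists (- th), 1; split => //.
  by rewrite cover_probE// normrN divr1 gtr0_norm.
- apply: le_ereal_inf_tmp => _ [m [s [s0 ->]]].
  by rewrite cover_probE// lee_fin; apply: (coverage_min _ cross); rewrite divr_ge0// ltW.
Qed.

End density.

Theorem theorem3p2 (R : realType) (f0 : R -> R)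
  (hcont : continuous f0)
  (hnonneg : forall z : R, 0 <= f0 z)
  (hint : (\int[@lebesgue_measure R]_z (f0 z)%:E = 1)%E)
  (hsym : forall z : R, f0 (- z) = f0 z)
  (hMLR : forall a1 a2 : R, 0 < a1 -> a1 < a2 ->
     strictly_monotone_pos (fun th => gscale f0 th a2 / gscale f0 th a1))
  (hconv : forall a1 a2 : R, 0 < a1 -> a1 < a2 ->
     convex_pos (fun th => ln (gscale f0 th a2 / gscale f0 th a1))) :
  exists theta : R -> R,
    (forall c : R, 1 < c ->
       0 < theta c /\
       f0 (c / (c + 1) * theta c) / f0 (c / (c - 1) * theta c) = (c + 1) / (c - 1) /\
       (forall t : R, 0 < t ->
          f0 (c / (c + 1) * t) / f0 (c / (c - 1) * t) = (c + 1) / (c - 1) ->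
          t = theta c)) /\
    {within `]1, +oo[, continuous theta} /\
    (forall c : R, 1 < c ->
       ereal_inf [set p | exists mu sigma : R, 0 < sigma /\ p = cover_prob f0 c mu sigma]
       = (cdf_of f0 (c / (c + 1) * theta c) + 1 - cdf_of f0 (c / (c - 1) * theta c))%:E) /\
    {within `]1, +oo[, continuous (fun c => cdf_of f0 (c / (c + 1) * theta c) + 1
                                           - cdf_of f0 (c / (c - 1) * theta c))}.
Proof.
have [theta Htheta] := exists_crossing_family hcont hnonneg hint hMLR.
have theta_cont c : 1 < c -> {for c, continuous theta}.
  exact: crossing_family_continuous hcont _ _ Htheta.
have within_gt1 (f : R -> R) : (forall c, 1 < c -> {for c, continuous f}) ->
    {within `]1, +oo[, continuous f}.
  move=> fc; rewrite continuous_open_subspace; last exact: interval_open.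
  move=> c; rewrite inE /= in_itv /= andbT; exact: fc.
exists theta; split; [|split; [|split]].
- move=> c c1; have [th0 Dth _ _] := Htheta c c1.
  split=> //; split=> [|t t0 /(root_equationE hnonneg hMLR c1 t0)].
    exact/(root_equationE hnonneg hMLR c1 th0).
  exact: crosses_down_unique (Htheta c c1) t0.
- exact: within_gt1.
- by move=> c c1; exact: inf_cover_prob hcont hnonneg hint hsym _ _ c1 (Htheta c c1).
- apply: within_gt1 => c c1.
  apply: (continuous_coverage_param hcont hnonneg hint _ _ _ _ _ _ (theta_cont c c1));
    apply: continuous_div_shift; rewrite gt_eqF//; lra.
Qed.
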